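(* Let $(M,\cdot,1)$ be a monoid, $\Sigma$ a finite alphabet, $A=(Q,\Sigma,u,i_u,\delta,w,\rho)$ an $M$-DFA, and $\pi$ a selection function for $P_A/\approx_A$ as described below. Then the pair $(g^\pi_A,f^\pi_A)$ is a factorization on $L$, i.e. $g^\pi_A(\ell)\cdot f^\pi_A(\ell)=\ell$ for all $\ell\in L$.
   Context: $L$ is the set of all functions $\Sigma^*\to M$; $(m\cdot\ell)(\gamma)=m\cdot\ell(\gamma)$. A factorization on $L$ is a pair $(g,f)$ with $g:L\to M$, $f:L\to L$, $g(\ell)\cdot f(\ell)=\ell$ for all $\ell$. An $M$-DFA is $A=(Q,\Sigma,u,i_u,\delta,w,\rho)$ with $Q$ finite nonempty, initial state $u$, initial value $i_u\in M$, $\delta:Q\times\Sigma\to Q$, $w:Q\times\Sigma\to M$, $\rho:Q\to M$. Write $q\alpha$ for the extended transition ($q\varepsilon=q$, $q(\alpha\sigma)=\delta(q\alpha,\sigma)$), $w^*(q,\varepsilon)=1$, $w^*(q,\alpha\sigma)=w^*(q,\alpha)\cdot w(q\alpha,\sigma)$. $\mathcal{A}(\alpha)=i_u\cdot w^*(u,\alpha)\cdot\rho(u\alpha)$ and, for $q\in Q$, $\mathcal{A}_q(\alpha)=w^*(q,\alpha)\cdot\rho(q\alpha)$. For a word $\alpha$, $\Delta_\alpha(\ell)(\gamma)=\ell(\alpha\gamma)$. Natural factorization: let $P_A=\{((\sigma,q),\Delta_\sigma(\mathcal{A}_q))\mid\sigma\in\Sigma,q\in Q\}\cup\{((\varepsilon,u),\mathcal{A})\}$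 and let $\approx_A$ be the equivalence relation on $P_A$ identifying two elements iff their $M$-language components are equal. A selection function $\pi$ chooses one representative in each class of $P_A/\approx_A$, always choosing $((\varepsilon,u),\mathcal{A})$ as the representative of its class. Define $f^\pi_A:L\to L$, $g^\pi_A:L\to M$ by: if $\ell=\mathcal{A}$, then $f^\pi_A(\ell)=\mathcal{A}_u$, $g^\pi_A(\ell)=i_u$; if $\ell\neq\mathcal{A}$ and $\ell$ is the language component of some class of $P_A/\approx_A$ whose chosen representative is $((\sigma,q),\Delta_\sigma(\mathcal{A}_q))$, then $f^\pi_A(\ell)=\mathcal{A}_{q\sigma}$, $g^\pi_A(\ell)=w(q,\sigma)$; otherwise $f^\pi_A(\ell)=\ell$, $g^\pi_A(\ell)=1$. *)

From mathcomp Require Import all_boot.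
From Stdlib Require Import ClassicalEpsilon.
Set Implicit Arguments. Unset Strict Implicit. Unset Printing Implicit Defensive.

Section MDFA.
Variables (M : Type) (mul : M -> M -> M) (one : M).
Variables (Sigma Q : finType).

Record MDFA := mkMDFA {
  init  : Q;
  ival  : M;
  delta : Q -> Sigma -> Q;
  wt    : Q -> Sigma -> M;
  rho   : Q -> M }.

Definition Lang := seq Sigma -> M.

Variable A : MDFA.

Definition step (p : Q * M) (s : Sigma) : Q * M :=
  (delta A p.1 s, mul p.2 (wt A p.1 s)).

Definition ext (q : Q) (a : seq Sigma) : Q := (foldl step (q, one) a).1.
Definition wstar (q : Q) (a : seq Sigma) : M := (foldl step (q, one) a).2.

Definition langA : Lang := fun a => mul (ival A) (mul (wstar (init A) a) (rho A (ext (init A) a))).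
Definition langQ (q : Q) : Lang := fun a => mul (wstar q a) (rho A (ext q a)).

Definition Delta (a : seq Sigma) (l : Lang) : Lang := fun g => l (a ++ g).

(* Index of elements of P_A: (Some sigma, q) stands for ((sigma,q), Delta_sigma(A_q)),
   (None, u) stands for ((eps,u), A). *)
Definition PIdx := (option Sigma * Q)%type.
Definition inPA (p : PIdx) : Prop :=
  match p.1 with Some _ => True | None => p.2 = init A end.
Definition langP (p : PIdx) : Lang :=
  match p with (Some s, q) => Delta [:: s] (langQ q) | (None, _) => langA end.

(* A selection function: since classes of P_A/~A are determined by their
   language component, pi is given as a map from languages to indices; for every
   class (language l of some element of P_A) pi l is an element of P_A in that
   class, and the class of A is represented by ((eps,u),A). *)
Definition selection (pi : Lang -> PIdx) : Prop :=
  (forall p, inPA p -> inPA (pi (langP p)) /\ langP (pi (langP p)) = langP p)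
  /\ pi langA = (None, init A).

Definition dec (P : Prop) : {P} + {~ P} := excluded_middle_informative P.

Definition f_pi (pi : Lang -> PIdx) (l : Lang) : Lang :=
  if dec (l = langA) then langQ (init A)
  else if dec (exists p, inPA p /\ langP p = l) then
    match pi l with (Some s, q) => langQ (delta A q s) | (None, _) => l end
  else l.

Definition g_pi (pi : Lang -> PIdx) (l : Lang) : M :=
  if dec (l = langA) then ival A
  else if dec (exists p, inPA p /\ langP p = l) then
    match pi l with (Some s, q) => wt A q s | (None, _) => one end
  else one.

Definition scal (m : M) (l : Lang) : Lang := fun g => mul m (l g).

End MDFA.

From mathcomp Require Import all_boot.
From Stdlib Require Import FunctionalExtensionality.

(* Unfolding one letter of the run gives Delta_s(A_q) = w(q,s) . A_(qs), and
   A = i_u . A_u holds by definition; so every element of P_A, in particular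
   the chosen representative of a class, splits as weight times residual
   language, while all remaining languages are split as 1 . l. *)

Section Factorization.

Variables (M : Type) (mul : M -> M -> M) (one : M).
Hypothesis mulA : forall x y z, mul x (mul y z) = mul (mul x y) z.
Hypothesis mul1m : forall x, mul one x = x.
Hypothesis mulm1 : forall x, mul x one = x.
Variables (Sigma Q : finType) (A : MDFA M Sigma Q).

Lemma foldl_stepE (a : seq Sigma) (q : Q) (m : M) :
  foldl (step mul A) (q, m) a = (ext mul one A q a, mul m (wstar mul one A q a)).
Proof.
elim: a q m => [|s a IHa] q m; first by rewrite /ext /wstar /= mulm1.
by rewrite /ext /wstar /= /step /= -/(step mul A) !IHa /= mul1m mulA.
Qed.

Lemma ext_cons (q : Q) (s : Sigma) (a : seq Sigma) :
  ext mul one A q (s :: a) = ext mul one A (delta A q s) a.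
Proof. by rewrite {1}/ext /= /step /= -/(step mul A) foldl_stepE. Qed.

Lemma wstar_cons (q : Q) (s : Sigma) (a : seq Sigma) :
  wstar mul one A q (s :: a) = mul (wt A q s) (wstar mul one A (delta A q s) a).
Proof. by rewrite {1}/wstar /= /step /= -/(step mul A) foldl_stepE /= mul1m. Qed.

Lemma scal1 (l : Lang M Sigma) : scal mul one l = l.
Proof. by apply: functional_extensionality => a; rewrite /scal mul1m. Qed.

Lemma Delta1_langQ (q : Q) (s : Sigma) :
  Delta [:: s] (langQ mul one A q) = scal mul (wt A q s) (langQ mul one A (delta A q s)).
Proof.
apply: functional_extensionality => a.
by rewrite /Delta /scal /langQ /= ext_cons wstar_cons mulA.
Qed.

End Factorization.

Theorem lemma4 (M : Type) (mul : M -> M -> M) (one : M)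
  (mulA : forall x y z, mul x (mul y z) = mul (mul x y) z)
  (mul1m : forall x, mul one x = x) (mulm1 : forall x, mul x one = x)
  (Sigma Q : finType) (A : MDFA M Sigma Q)
  (pi : Lang M Sigma -> PIdx Sigma Q)
  (Hpi : selection mul one A pi) :
  forall l : Lang M Sigma,
    scal mul (g_pi mul one A pi l) (f_pi mul one A pi l) = l.
Proof.
move=> l; rewrite /g_pi /f_pi.
case: (dec _) => [Hl | _] /=; first by rewrite Hl.
case: (dec _) => [[p [Hp Hl]] | _] /=; last exact: scal1.
rewrite -Hl.
have [_] := proj1 Hpi p Hp.
case: (pi (langP mul one A p)) => [[s|] q] /= Hrep; last exact: scal1.
by rewrite -Hrep Delta1_langQ.
Qed.
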